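(* For every $n\geq 1$, $$\sum_{T\in \mathcal P_{n,0}}x^{\mathrm{young}_T(1)}\,t^{\mathrm{eld}(T)}=\prod_{k=0}^{n-2}(x+k+kt).$$ In particular, the number of increasing (non-plane) rooted trees on $[n]$ is $(n-1)!$ and the number of increasing plane trees on $[n]$ is $(2n-3)!!$.
   Context: All trees are rooted trees whose vertices are labeled by distinct positive integers. A vertex $j$ is a descendant of $i$ if the path from the root to $j$ passes through $i$ (every vertex is a descendant of itself); $\beta_T(i)$ is the smallest descendant of $i$. If $j$ is a descendant of $i$ joined to $i$ by an edge, $j$ is a child of $i$ and the edge is written $(i,j)$; children of the same vertex are brothers. A plane tree is a rooted tree in which the children of each vertex are linearly ordered (left to right). In a plane tree $T$, a vertex $j$ is elder if it has a brother $k$ to its right with $\beta_T(k)<\beta_T(j)$. $\mathrm{eld}_T(v)$ is the number of elder children of $v$, $\mathrm{eld}(T)$ the total number of elder vertices, $\deg_T(v)$ the number of children of $v$, and $\mathrm{young}_T(v)=\deg_T(v)-\mathrm{eld}_T(v)$. An edge $(i,j)$ is proper if $j$ is an elder child of $i$ or $i<\beta_T(j)$; otherwise improper. $\mathcal P_{n,0}$ is the set of plane trees on $[n]=\{1,\dots,n\}$ (any root) with no improper edges. A (plane) tree on $[n]$ is increasing if the labels along every path from the root to another vertex form an increasing sequence. Here $(2n-3)!!=1\cdot3\cdots(2n-3)$, equal to $1$ when $n=1$. *)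

From HB Require Import structures.
From mathcomp Require Import all_boot all_order all_algebra.
Set Implicit Arguments. Unset Strict Implicit. Unset Printing Implicit Defensive.

(* A node carries its label and the left-to-right ordered list of the
   subtrees rooted at its children. *)
Inductive ptree := PNode of nat & seq ptree.

Definition plabel (t : ptree) : nat := let: PNode a _ := t in a.
Definition pkids (t : ptree) : seq ptree := let: PNode _ ts := t in ts.

Fixpoint ptree_enc (t : ptree) : GenTree.tree nat :=
  let: PNode a ts := t in GenTree.Node a (map ptree_enc ts).
Fixpoint ptree_dec (g : GenTree.tree nat) : ptree :=
  match g with
  | GenTree.Leaf _ => PNode 0 [::]
  | GenTree.Node a gs => PNode a (map ptree_dec gs)
  end.

Lemma ptree_encK_aux : forall t, ptree_dec (ptree_enc t) = t.
Proof.
fix IH 1; case=> a ts /=; congr PNode.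
elim: ts => //= u us IHus; by rewrite IH IHus.
Qed.
Lemma ptree_encK : cancel ptree_enc ptree_dec.
Proof. exact: ptree_encK_aux. Qed.

HB.instance Definition _ := Countable.copy ptree (can_type ptree_encK).

Fixpoint labels (t : ptree) : seq nat :=
  let: PNode a ts := t in a :: flatten (map labels ts).

(* all subtrees; the subtree rooted at vertex v represents v *)
Fixpoint subtrees (t : ptree) : seq ptree :=
  let: PNode _ ts := t in t :: flatten (map subtrees ts).

Definition plane_tree_on (n : nat) (t : ptree) : bool :=
  perm_eq (labels t) (iota 1 n).

Definition beta (t : ptree) : nat := foldr minn (plabel t) (labels t).

Definition pdef : ptree := PNode 0 [::].

(* the i-th child (0-based, left to right) among the children ts is elder:
   it has a brother to its right with a smaller beta *)
Definition elder (ts : seq ptree) (i : nat) : bool :=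
  has (fun j => (i < j) && (beta (nth pdef ts j) < beta (nth pdef ts i)))
      (iota 0 (size ts)).

Definition eld_node (u : ptree) : nat :=
  count (elder (pkids u)) (iota 0 (size (pkids u))).
Definition deg_node (u : ptree) : nat := size (pkids u).
Definition young_node (u : ptree) : nat := deg_node u - eld_node u.

Definition eld (t : ptree) : nat := sumn (map eld_node (subtrees t)).

(* young_T(v) for the vertex labelled v (labels are distinct) *)
Definition young_at (v : nat) (t : ptree) : nat :=
  sumn [seq young_node u | u <- subtrees t & plabel u == v].

Definition proper_edge (u : ptree) (i : nat) : bool :=
  elder (pkids u) i || (plabel u < beta (nth pdef (pkids u) i)).

Definition no_improper (t : ptree) : bool :=
  all (fun u => all (proper_edge u) (iota 0 (size (pkids u)))) (subtrees t).

(* increasing plane tree: labels increase along every root-to-vertex path,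
   i.e. along every edge (parent, child) *)
Definition increasing_ptree (t : ptree) : bool :=
  all (fun u => all (fun c => plabel u < plabel c) (pkids u)) (subtrees t).

(* Vertex i : 'I_n stands for the label i+1.  p i = None iff i is the root,
   p i = Some j iff j is the parent of i. *)
Definition rooted_tree (n : nat) (p : {ffun 'I_n -> option 'I_n}) : bool :=
  (#|[set i | p i == None]| == 1)
  && [forall i, exists k : 'I_n.+1, iter k (fun o => obind p o) (Some i) == None].

Definition increasing_rtree (n : nat) (p : {ffun 'I_n -> option 'I_n}) : bool :=
  [forall i, if p i is Some j then j < i else true].

Fixpoint dfact (m : nat) : nat :=
  match m with
  | 0 | 1 => 1
  | (k.+2) as m' => m' * dfact k
  end.

From HB Require Import structures.
From mathcomp Require Import all_boot all_order all_algebra.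
From mathcomp Require Import zify ring.
Import GRing.Theory Num.Theory.
Set Implicit Arguments. Unset Strict Implicit. Unset Printing Implicit Defensive.

(* A plane tree has no improper edge iff it is increasing: if some child of a vertex a had
   its smallest descendant below a, the rightmost such child would be neither elder nor
   above a.  An increasing plane tree on [1..k+1] arises in exactly one way from one on
   [1..k] by attaching the leaf k+1 at one of its 2k-1 slots, i.e. as the j-th child,
   j <= deg v, of some vertex v.  The new leaf is elder unless it is the last child, in
   which case young(v) grows by one, and no other vertex changes status.  Summing over the
   slots multiplies x^young(1) t^eld by x + (k-1) + (k-1)t.  Setting x = t = 1 counts
   the trees; and an increasing rooted tree on [1..n] is a free choice of a parent j < i
   for each vertex i > 1. *)

Lemma ptree_nested_ind (P : ptree -> Prop) :
  (forall a ts, (forall c, c \in ts -> P c) -> P (PNode a ts)) -> forall t, P t.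
Proof.
move=> IHnode; fix IH 1; case=> a ts; apply: IHnode.
elim: ts => [|u us IHus] c; first (rewrite in_nil => F; discriminate F).
rewrite inE => /orP [/eqP -> | Hc]; [exact: IH | exact: IHus].
Qed.

Lemma plabel_labels t : plabel t \in labels t.
Proof. by case: t => a ts; rewrite mem_head. Qed.

Lemma labels_kid a ts c : c \in ts -> {subset labels c <= labels (PNode a ts)}.
Proof. by move=> cts x xc; rewrite inE; apply/orP; right; apply/flatten_mapP; exists c. Qed.

Lemma map_plabel_subtrees t : map plabel (subtrees t) = labels t.
Proof.
elim/ptree_nested_ind: t => a ts IH /=; congr (_ :: _).
by rewrite map_flatten -map_comp; congr flatten; apply/eq_in_map.
Qed.

Lemma uniq_subtrees t : uniq (labels t) -> uniq (subtrees t).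
Proof. by rewrite -map_plabel_subtrees; apply: map_uniq. Qed.

Lemma subtrees_self t : t \in subtrees t.
Proof. by case: t => a ts; rewrite mem_head. Qed.

Lemma kid_subtrees u c : c \in pkids u -> c \in subtrees u.
Proof.
by case: u => a ts /= cts; rewrite inE; apply/orP; right; apply/flatten_mapP; exists c;
  last exact: subtrees_self.
Qed.

Lemma subtrees_trans t u : u \in subtrees t -> {subset subtrees u <= subtrees t}.
Proof.
elim/ptree_nested_ind: t u => a ts IH u /=; rewrite inE => /predU1P [-> // | ].
move=> /flatten_mapP [c cts uc] w wu; rewrite inE; apply/orP; right.
by apply/flatten_mapP; exists c => //; apply: IH wu.
Qed.

Lemma plabel_subtrees t u : u \in subtrees t -> plabel u \in labels t.
Proof. by move=> ut; rewrite -map_plabel_subtrees map_f. Qed.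

Lemma kids_label_eq ts c1 c2 x : uniq (flatten (map labels ts)) -> c1 \in ts -> c2 \in ts ->
  x \in labels c1 -> x \in labels c2 -> c1 = c2.
Proof.
elim: ts => //= d ds IH; rewrite cat_uniq => /and3P [_ /hasPn dds uds].
have kid_labels c y : c \in ds -> y \in labels c -> y \in flatten (map labels ds).
  by move=> cds yc; apply/flatten_mapP; exists c.
rewrite !inE => /predU1P [-> | c1ds] /predU1P [-> | c2ds] // x1 x2.
- by move: (dds x (kid_labels _ _ c2ds x2)); rewrite x1.
- by move: (dds x (kid_labels _ _ c1ds x1)); rewrite x2.
- exact: IH x1 x2.
Qed.

Lemma uniq_kid_labels ts c : uniq (flatten (map labels ts)) -> c \in ts -> uniq (labels c).
Proof.
elim: ts => //= d ds IH; rewrite cat_uniq => /and3P [ud _ uds].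
by rewrite inE => /predU1P [-> // | /IH]; apply.
Qed.

Definition subtree_sum (f : ptree -> nat) (t : ptree) : nat := \sum_(u <- subtrees t) f u.

Lemma subtree_sum_node f a ts :
  subtree_sum f (PNode a ts) = f (PNode a ts) + \sum_(c <- ts) subtree_sum f c.
Proof. by rewrite /subtree_sum /= big_cons big_flatten big_map. Qed.

Lemma eq_in_subtree_sum f g t : {in subtrees t, f =1 g} -> subtree_sum f t = subtree_sum g t.
Proof. exact: eq_big_seq. Qed.

Lemma subtree_sumD f g t :
  subtree_sum (fun u => f u + g u) t = subtree_sum f t + subtree_sum g t.
Proof. exact: big_split. Qed.

Lemma eld_subtree_sum t : eld t = subtree_sum eld_node t.
Proof. by rewrite /eld sumnE big_map. Qed.

Lemma young_at_subtree_sum v t :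
  young_at v t = subtree_sum (fun u => (plabel u == v) * young_node u) t.
Proof.
rewrite /young_at sumnE big_map big_filter big_mkcond.
by apply: eq_bigr => u _; case: eqP; rewrite ?mul1n.
Qed.

Lemma subtree_sum_at (g : ptree -> nat) t u : uniq (labels t) -> u \in subtrees t ->
  subtree_sum (fun w => (plabel w == plabel u) * g w) t = g u.
Proof.
move=> ut; rewrite -map_plabel_subtrees in ut.
rewrite /subtree_sum; elim: (subtrees t) ut => //= w s IH /andP [ws us].
rewrite big_cons inE => /predU1P [-> | us'].
  rewrite eqxx mul1n big1_seq ?addn0 // => w' /andP [_ w's].
  by case: eqP => // E; move: ws; rewrite -E map_f.
case: eqP => [E | _]; last by rewrite IH.
by move: ws; rewrite E map_f.
Qed.

Lemma subtree_sum_deg t : (subtree_sum deg_node t).+1 = size (labels t).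
Proof.
elim/ptree_nested_ind: t => a ts IH.
rewrite subtree_sum_node /= size_flatten /shape -map_comp sumnE big_map.
rewrite [in RHS](eq_big_seq (fun c => 1 + subtree_sum deg_node c)) => [|c /IH /= <- //].
by rewrite big_split /= sum1_size addnC.
Qed.

(** * Smallest descendants, elder children and proper edges *)

Lemma leq_foldr_minn y x s : (y <= foldr minn x s) = (y <= x) && all (leq y) s.
Proof. by elim: s => /= [|z s IH]; rewrite ?andbT // leq_min IH andbCA. Qed.

Lemma leq_beta y t : (y <= beta t) = all (leq y) (labels t).
Proof. by case: t => a ts; rewrite /beta /= leq_min leq_foldr_minn andbA andbb. Qed.

Lemma beta_le_plabel t : beta t <= plabel t.
Proof.
have /esym/allP := leq_beta (beta t) t; rewrite leqnn; apply; exact: plabel_labels.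
Qed.

Lemma iota1_map n : iota 1 n = map S (iota 0 n).
Proof. by rewrite -[1]/(1 + 0) iotaDl. Qed.

Lemma elder_cons0 t ts : elder (t :: ts) 0 = has (fun c => beta c < beta t) ts.
Proof.
rewrite /elder /= iota1_map has_map.
by rewrite -[in RHS](mkseq_nth pdef ts) /mkseq has_map.
Qed.

Lemma elder_consS t ts j : elder (t :: ts) j.+1 = elder ts j.
Proof. by rewrite /elder /= iota1_map has_map. Qed.

Fixpoint elder_count (bs : seq nat) : nat :=
  if bs is b :: bs' then has (fun c => c < b) bs' + elder_count bs' else 0.

Lemma eld_node_elder_count u : eld_node u = elder_count (map beta (pkids u)).
Proof.
case: u => a ts; rewrite /eld_node /=.
elim: ts => //= t ts IH; rewrite iota1_map count_map elder_cons0 has_map -IH.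
by congr (_ + _); apply: eq_count => j; rewrite /= elder_consS.
Qed.

Lemma elder_count_le_size bs : elder_count bs <= size bs.
Proof. by elim: bs => //= b bs IH; case: has => /=; lia. Qed.

(* Read from the right: a child with [beta c <= a] must be elder, so some brother further
   right has an even smaller beta. *)
Lemma proper_edges_beta a ts :
  all (proper_edge (PNode a ts)) (iota 0 (size ts)) -> all (fun c => a < beta c) ts.
Proof.
elim: ts => //= t ts IH; rewrite iota1_map all_map /proper_edge /= elder_cons0.
move=> /andP [pt pts]; have ats : all (fun c => a < beta c) ts.
  by apply: IH; apply: sub_all pts => j; rewrite /proper_edge /= elder_consS.
rewrite ats andbT; case/orP: pt => // /hasP [c cts ct].
exact: ltn_trans (allP ats c cts) ct.
Qed.

Lemma increasing_ptree_node a ts :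
  increasing_ptree (PNode a ts) = all (fun c => a < plabel c) ts && all increasing_ptree ts.
Proof.
by rewrite /increasing_ptree /=; congr (_ && _); elim: ts => //= c cs <-; rewrite all_cat.
Qed.

Lemma increasing_subtrees t u : increasing_ptree t -> u \in subtrees t -> increasing_ptree u.
Proof. by move=> /allP inc ut; apply/allP => w /(subtrees_trans ut) /inc. Qed.

Lemma increasing_beta t : increasing_ptree t -> beta t = plabel t.
Proof.
move=> inc; apply/anti_leq; rewrite beta_le_plabel leq_beta /=.
elim/ptree_nested_ind: t inc => a ts IH; rewrite increasing_ptree_node => /andP [/allP al /allP ai].
rewrite /= leqnn; apply/allP => x /flatten_mapP [c cts xc].
have /allP := IH c cts (ai c cts); move=> /(_ x xc); exact/leq_trans/ltnW/al.
Qed.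

Lemma no_improperE t : no_improper t = increasing_ptree t.
Proof.
apply/idP/idP => [/allP np | inc].
  apply/allP => -[a ts] /np /proper_edges_beta /allP ab; apply/allP => c /ab /= ac.
  exact: leq_trans ac (beta_le_plabel c).
apply/allP => u ut; have := increasing_subtrees inc ut.
case: u {ut} => a ts; rewrite increasing_ptree_node => /andP [/allP al /allP ai].
apply/allP => i; rewrite mem_iota => /andP [_ its]; apply/orP; right.
by rewrite /= increasing_beta ?al ?ai ?mem_nth.
Qed.

(** * Attaching a maximal leaf *)

Definition ins_seq (T : Type) (i : nat) (x : T) (s : seq T) : seq T := take i s ++ x :: drop i s.

Lemma perm_ins_seq (T : eqType) i (x : T) s : perm_eq (ins_seq i x s) (x :: s).
Proof.
apply/permP => p; rewrite /ins_seq count_cat /= -[in RHS](cat_take_drop i s) count_cat.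
by rewrite addnCA.
Qed.

Lemma map_ins_seq (T S : Type) (f : T -> S) i x s :
  map f (ins_seq i x s) = ins_seq i (f x) (map f s).
Proof. by rewrite /ins_seq map_cat /= map_take map_drop. Qed.

Lemma size_ins_seq (T : Type) i (x : T) s : size (ins_seq i x s) = (size s).+1.
Proof. by rewrite /ins_seq size_cat /= addnS -size_cat cat_take_drop. Qed.

Definition leaf (m : nat) : ptree := PNode m [::].

Fixpoint ins_leaf (v i m : nat) (t : ptree) {struct t} : ptree :=
  let: PNode a ts := t in
  let ts' := map (ins_leaf v i m) ts in
  PNode a (if a == v then ins_seq i (leaf m) ts' else ts').

Definition ins_leaf_root (v i m : nat) (u : ptree) : ptree :=
  let: PNode a ts := u in PNode a (if a == v then ins_seq i (leaf m) ts else ts).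

Lemma plabel_ins_leaf v i m t : plabel (ins_leaf v i m t) = plabel t.
Proof. by case: t. Qed.

Lemma sum_count_labels (p : pred nat) ts :
  count p (flatten (map labels ts)) = \sum_(c <- ts) count p (labels c).
Proof. by rewrite count_flatten sumnE !big_map. Qed.

Lemma count_labels_ins_leaf v i m (p : pred nat) t :
  count p (labels (ins_leaf v i m t)) = count p (labels t) + p m * count_mem v (labels t).
Proof.
elim/ptree_nested_ind: t => a ts IH.
have kidsE : \sum_(c <- map (ins_leaf v i m) ts) count p (labels c) =
    \sum_(c <- ts) count p (labels c) + p m * \sum_(c <- ts) count_mem v (labels c).
  by rewrite big_map big_distrr -big_split; apply: eq_big_seq => c /IH.
rewrite /= !sum_count_labels; case: eqP => [-> | _] /=;
  rewrite ?(perm_big _ (perm_ins_seq _ _ _)) ?big_cons kidsE /=;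
  set A := \sum_(c <- ts) count p (labels c);
  set B := \sum_(c <- ts) count_mem v (labels c); case: (p m); lia.
Qed.

Lemma perm_labels_ins_leaf v i m t :
  perm_eq (labels (ins_leaf v i m t)) (nseq (count_mem v (labels t)) m ++ labels t).
Proof. by apply/permP => p; rewrite count_labels_ins_leaf count_cat count_nseq addnC. Qed.

Lemma beta_ins_leaf v i m t :
  all (fun z => z < m) (labels t) -> beta (ins_leaf v i m t) = beta t.
Proof.
move=> tm; have leq_betaE y : (y <= beta (ins_leaf v i m t)) = (y <= beta t).
  rewrite !leq_beta (perm_all _ (perm_labels_ins_leaf _ _ _ _)) all_cat all_nseq.
  case yt: (all _ (labels t)); rewrite ?andbF // andbT; apply/orP; right.
  have := allP tm _ (plabel_labels t); have := allP yt _ (plabel_labels t); lia.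
by apply/anti_leq; rewrite leq_betaE leqnn -leq_betaE leqnn.
Qed.

Lemma all_labels_kid (P : pred nat) a ts c :
  all P (labels (PNode a ts)) -> c \in ts -> all P (labels c).
Proof. by move=> /allP Pt cts; apply/allP => x /(labels_kid a cts) /Pt. Qed.

Lemma increasing_ins_leaf v i m t : all (fun z => z < m) (labels t) ->
  increasing_ptree (ins_leaf v i m t) = increasing_ptree t.
Proof.
elim/ptree_nested_ind: t => a ts IH tm.
have kids_inc : all increasing_ptree (map (ins_leaf v i m) ts) = all increasing_ptree ts.
  by rewrite all_map; apply: eq_in_all => c cts /=; rewrite IH //; apply: all_labels_kid tm cts.
have kids_lbl :
    all (fun c => a < plabel c) (map (ins_leaf v i m) ts) = all (fun c => a < plabel c) ts.
  by rewrite all_map; apply: eq_all => c /=; rewrite plabel_ins_leaf.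
rewrite /= !increasing_ptree_node; case: eqP => _; last by rewrite kids_inc kids_lbl.
rewrite !(perm_all _ (perm_ins_seq _ _ _)) /= kids_inc kids_lbl.
by move: tm => /= /andP [-> _].
Qed.

Definition beta_local (f : ptree -> nat) :=
  forall a ts ts', map beta ts = map beta ts' -> f (PNode a ts) = f (PNode a ts').

Lemma subtree_sum_ins_leaf f v i m t : beta_local f -> all (fun z => z < m) (labels t) ->
  subtree_sum f (ins_leaf v i m t) =
  subtree_sum (f \o ins_leaf_root v i m) t + count_mem v (labels t) * f (leaf m).
Proof.
move=> f_loc; elim/ptree_nested_ind: t => a ts IH tm.
have betaE : map beta (map (ins_leaf v i m) ts) = map beta ts.
  by rewrite -map_comp; apply/eq_in_map => c cts /=; rewrite beta_ins_leaf ?(all_labels_kid tm).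
have kidsE : \sum_(c <- map (ins_leaf v i m) ts) subtree_sum f c =
    \sum_(c <- ts) subtree_sum (f \o ins_leaf_root v i m) c +
    (\sum_(c <- ts) count_mem v (labels c)) * f (leaf m).
  rewrite big_map big_distrl -big_split; apply: eq_big_seq => c cts /=.
  by rewrite IH ?(all_labels_kid tm).
rewrite /= !subtree_sum_node /= sum_count_labels; case: eqP => [-> | _] /=.
  rewrite (perm_big _ (perm_ins_seq _ _ _)) big_cons kidsE.
  rewrite (f_loc _ _ (ins_seq i (leaf m) ts)); last by rewrite !map_ins_seq betaE.
  by rewrite /subtree_sum /= big_seq1 -/(leaf m) mulnDl mul1n !addnA; congr (_ + _); rewrite addnAC.
by rewrite kidsE (f_loc _ _ ts) // add0n addnA.
Qed.

Lemma elder_count_ins_max M i bs : all (fun b => b < M) bs ->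
  elder_count (ins_seq i M bs) = elder_count bs + (i < size bs).
Proof.
rewrite /ins_seq; elim: bs i => [|b bs IH] [|i] //= /andP [bM bsM].
  by rewrite bM addnC.
rewrite IH // -/(ins_seq i M bs) (perm_has _ (perm_ins_seq _ _ _)) /= ltnNge ltnW //.
by rewrite addnA.
Qed.

Lemma beta_leaf m : beta (leaf m) = m.
Proof. by rewrite /beta /= minnn. Qed.

Lemma kids_beta_lt m t u : all (fun z => z < m) (labels t) -> u \in subtrees t ->
  all (fun b => b < m) (map beta (pkids u)).
Proof.
move=> tm ut; rewrite all_map; apply/allP => c cu /=.
apply: leq_ltn_trans (beta_le_plabel c) _; apply: (allP tm); apply: plabel_subtrees.
exact: subtrees_trans ut _ (kid_subtrees cu).
Qed.

(* The new leaf [m] exceeds every beta, so it is elder iff [i < deg v] and its brothers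
   keep their status. *)
Lemma eld_ins_leaf v i m t : all (fun z => z < m) (labels t) ->
  eld (ins_leaf v i m t) = eld t + subtree_sum (fun u => (plabel u == v) * (i < deg_node u)) t.
Proof.
move=> tm; rewrite !eld_subtree_sum subtree_sum_ins_leaf //; last first.
  by move=> a ts ts' Ets; rewrite !eld_node_elder_count /= Ets.
rewrite [eld_node _]/= muln0 addn0 -subtree_sumD; apply: eq_in_subtree_sum => -[a ts] ut /=.
rewrite !eld_node_elder_count /=; case: eqP => _; rewrite ?mul0n ?addn0 // mul1n.
by rewrite map_ins_seq beta_leaf elder_count_ins_max ?size_map ?(kids_beta_lt tm ut).
Qed.

Lemma young_at_ins_leaf v i m w t : all (fun z => z < m) (labels t) ->
  young_at w (ins_leaf v i m t) =
  young_at w t + subtree_sum (fun u => (plabel u == v) * ((plabel u == w) * (deg_node u <= i))) t.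
Proof.
move=> tm; rewrite !young_at_subtree_sum subtree_sum_ins_leaf //; last first.
  move=> a ts ts' Ets; rewrite /young_node /deg_node !eld_node_elder_count /= Ets.
  by rewrite -(size_map beta ts) Ets size_map.
rewrite [young_node _]/= !muln0 addn0 -subtree_sumD; apply: eq_in_subtree_sum => -[a ts] ut /=.
rewrite /young_node /deg_node !eld_node_elder_count /=.
case: ifP => [/eqP -> | _]; last by rewrite mul0n addn0.
rewrite size_ins_seq map_ins_seq beta_leaf.
rewrite elder_count_ins_max ?(kids_beta_lt tm ut) // size_map.
have := elder_count_le_size (map beta ts); rewrite size_map.
by case: (v == w); rewrite ?mul0n ?mul1n // leqNgt; case: ltnP => /=; lia.
Qed.

Lemma uniq_map_in_inj (S T : eqType) (f : S -> T) s : uniq (map f s) -> {in s &, injective f}.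
Proof.
elim: s => //= w s IH /andP [ws us] x y; rewrite !inE.
case/predU1P => [-> | xs] /predU1P [-> | ys] // E.
- by move: ws; rewrite E map_f.
- by move: ws; rewrite -E map_f.
- exact: IH.
Qed.

Definition slots (t : ptree) : seq (nat * nat) :=
  [seq (plabel u, j) | u <- subtrees t, j <- iota 0 (deg_node u).+1].

Lemma slotsP t v i :
  reflect (exists2 u, u \in subtrees t & plabel u = v /\ i <= deg_node u) ((v, i) \in slots t).
Proof.
apply: (iffP allpairsPdep) => [[u [j [ut]]] | [u ut [<- iu]]].
  by rewrite mem_iota ltnS => ju [-> ->]; exists u.
by exists u, i; rewrite mem_iota ltnS.
Qed.

Lemma mem_slots_node a ts v i : (v, i) \in slots (PNode a ts) =
  ((v == a) && (i <= size ts)) || has (fun c => (v, i) \in slots c) ts.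
Proof.
apply/slotsP/orP => [[u] | [/andP [/eqP -> its] | /hasP [c cts /slotsP [u uc Pu]]]].
- rewrite inE => /predU1P [-> [<- its] | /flatten_mapP [c cts uc] Pu]; first by left; rewrite eqxx.
  by right; apply/hasP; exists c => //; apply/slotsP; exists u.
- by exists (PNode a ts); first exact: subtrees_self.
- by exists u => //; apply: subtrees_trans uc; apply: (kid_subtrees (u := PNode a ts)) cts.
Qed.

Lemma uniq_slots t : uniq (labels t) -> uniq (slots t).
Proof.
move=> ut; have plabel_inj : {in subtrees t &, injective plabel}.
  by apply: uniq_map_in_inj; rewrite map_plabel_subtrees.
apply: allpairs_uniq_dep => [|u _|]; first exact: uniq_subtrees.
  exact: iota_uniq.
move=> [u j] [u' j'] /allpairsPdep [w [k [wt _ [-> ->]]]].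
move=> /allpairsPdep [w' [k' [w't _ [-> ->]]]] /= [E ->].
by rewrite (plabel_inj _ _ wt w't E).
Qed.

Lemma slot_label t v i : (v, i) \in slots t -> v \in labels t.
Proof. by case/slotsP => u ut [<- _]; apply: plabel_subtrees. Qed.

Lemma ins_leaf_id v i m t : v \notin labels t -> ins_leaf v i m t = t.
Proof.
elim/ptree_nested_ind: t => a ts IH; rewrite inE negb_or => /andP [va vts].
rewrite /= eq_sym (negbTE va); congr PNode; apply: map_id_in => c cts; apply: IH => //.
by apply: contra vts => vc; apply/flatten_mapP; exists c.
Qed.

Lemma size_labels_ins_leaf v i m t :
  size (labels (ins_leaf v i m t)) = size (labels t) + count_mem v (labels t).
Proof. by rewrite -!count_predT count_labels_ins_leaf mul1n. Qed.

Lemma ins_leaf_inj m t v i v' i' : uniq (labels t) -> m \notin labels t ->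
  (v, i) \in slots t -> (v', i') \in slots t ->
  ins_leaf v i m t = ins_leaf v' i' m t -> (v, i) = (v', i').
Proof.
elim/ptree_nested_ind: t v i v' i' => a ts IH v i v' i' ut mt.
move: (ut) => /= /andP [a_kids u_kids].
have kid_slot_neq w j : has (fun c => (w, j) \in slots c) ts -> w != a.
  case/hasP => c cts /slot_label wc; apply: contraNneq a_kids => <-.
  by apply/flatten_mapP; exists c.
have root_kid j w k : has (fun c => (w, k) \in slots c) ts ->
    ins_leaf a j m (PNode a ts) != ins_leaf w k m (PNode a ts).
  move=> /kid_slot_neq wa; apply/eqP => /(congr1 (size \o pkids)).
  by rewrite /= eqxx eq_sym (negbTE wa) size_ins_seq !size_map; lia.
rewrite !mem_slots_node => /orP [/andP [/eqP -> ia] | vs] /orP [/andP [/eqP -> i'a] | v's].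
- have kids_id j : map (ins_leaf a j m) ts = ts.
    apply: map_id_in => c cts; apply: ins_leaf_id.
    by apply: contra a_kids => ac; apply/flatten_mapP; exists c.
  rewrite /= eqxx !kids_id => -[/(congr1 (index (leaf m)))].
  have leaf_kids j : leaf m \notin take j ts.
    apply: contra mt => /mem_take mts; apply: labels_kid mts _ (plabel_labels _).
  by rewrite /ins_seq !index_pivot ?leaf_kids ?size_takel // => ->.
- by move/eqP; rewrite (negbTE (root_kid _ _ _ v's)).
- by move/esym/eqP; rewrite (negbTE (root_kid _ _ _ vs)).
move: (vs) (v's) => /hasP [c cts vc] /hasP [c' c'ts v'c'].
rewrite /= eq_sym (negbTE (kid_slot_neq _ _ vs)) eq_sym (negbTE (kid_slot_neq _ _ v's)).
move=> -[/eq_in_map /(_ c cts) Ec].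
have uc := uniq_kid_labels u_kids cts.
have mc : m \notin labels c by apply: contra mt; apply: labels_kid.
case: (boolP (v' \in labels c)) => v'c.
  have cc' : c = c' by apply: kids_label_eq u_kids cts c'ts v'c (slot_label v'c').
  by subst c'; exact: IH cts _ _ _ _ uc mc vc v'c' Ec.
move: Ec; rewrite (ins_leaf_id _ _ v'c) => /(congr1 (size \o labels)) /=.
have := slot_label vc; rewrite size_labels_ins_leaf -has_pred1 has_count; lia.
Qed.

Fixpoint prune (m : nat) (t : ptree) {struct t} : ptree :=
  let: PNode a ts := t in PNode a [seq c <- map (prune m) ts | plabel c != m].

Lemma plabel_prune m t : plabel (prune m t) = plabel t.
Proof. by case: t. Qed.

Lemma labels_prune m t : {subset labels (prune m t) <= labels t}.
Proof.
elim/ptree_nested_ind: t => a ts IH x /=; rewrite !inE => /predU1P [-> | ]; first by rewrite eqxx.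
move=> /flatten_mapP [d]; rewrite mem_filter => /andP [_ /mapP [c cts ->]] /IH xc.
by apply/orP; right; apply/flatten_mapP; exists c; last exact: xc.
Qed.

Lemma prune_id m t : m \notin labels t -> prune m t = t.
Proof.
elim/ptree_nested_ind: t => a ts IH; rewrite inE negb_or => /andP [_ m_kids] /=.
have m_kid c : c \in ts -> m \notin labels c.
  by move=> cts; apply: contra m_kids => mc; apply/flatten_mapP; exists c.
rewrite (map_id_in (fun c cts => IH c cts (m_kid c cts))); congr PNode; apply/all_filterP.
apply/allP => c cts; apply: contraNneq (m_kid c cts) => <-; exact: plabel_labels.
Qed.

Lemma filter_ins_seq (T : Type) (p : pred T) i x s :
  ~~ p x -> filter p (ins_seq i x s) = filter p s.
Proof. by move=> /negbTE px; rewrite /ins_seq filter_cat /= px -filter_cat cat_take_drop. Qed.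

Lemma prune_ins_leaf v i m t : m \notin labels t -> prune m (ins_leaf v i m t) = t.
Proof.
move=> mt; rewrite -[RHS](prune_id mt); elim/ptree_nested_ind: t mt => a ts IH.
rewrite inE negb_or => /andP [_ m_kids] /=.
have kidsE : map (prune m) (map (ins_leaf v i m) ts) = map (prune m) ts.
  rewrite -map_comp; apply/eq_in_map => c cts /=; rewrite IH //.
  by apply: contra m_kids => mc; apply/flatten_mapP; exists c.
case: ifP => _; last by rewrite kidsE.
by rewrite map_ins_seq filter_ins_seq /= ?eqxx // kidsE.
Qed.

Lemma ins_leaf_at_root a i m ts : a \notin flatten (map labels ts) ->
  ins_leaf a i m (PNode a ts) = PNode a (ins_seq i (leaf m) ts).
Proof.
move=> a_kids; rewrite /= eqxx map_id_in // => c cts; apply: ins_leaf_id.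
by apply: contra a_kids => ac; apply/flatten_mapP; exists c.
Qed.

Lemma increasing_max_leaf m t : increasing_ptree t -> all (fun z => z <= m) (labels t) ->
  plabel t = m -> t = leaf m.
Proof.
case: t => a [|c cs] inc tm /= am; first by rewrite am.
rewrite increasing_ptree_node in inc; have /andP [/andP [ac _] _] := inc.
have /= := allP tm _ (labels_kid a (mem_head c cs) (plabel_labels c)).
by rewrite -am leqNgt ac.
Qed.

Lemma uniq_ins_leaf v i m t : v \in labels t ->
  uniq (labels (ins_leaf v i m t)) = uniq (labels t) && (m \notin labels t).
Proof.
move=> vt; rewrite (perm_uniq (perm_labels_ins_leaf _ _ _ _)) cat_uniq.
case ut: (uniq (labels t)); rewrite ?andbF // (count_uniq_mem _ ut) vt andbT /=.
by rewrite has_sym /= orbF.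
Qed.

Lemma ins_leaf_kids_split a A B m : uniq (labels (PNode a (A ++ leaf m :: B))) ->
  PNode a (A ++ leaf m :: B) = ins_leaf a (size A) m (PNode a (A ++ B)) /\
  m \notin labels (PNode a (A ++ B)).
Proof.
move=> ut; have /andP [a_kids _] := ut.
have a_AB : a \notin flatten (map labels (A ++ B)).
  apply: contra a_kids; rewrite !map_cat !flatten_cat !mem_cat /= inE.
  by case/orP => ->; rewrite ?orbT.
have tE : PNode a (A ++ leaf m :: B) = ins_leaf a (size A) m (PNode a (A ++ B)).
  by rewrite ins_leaf_at_root // /ins_seq take_size_cat // drop_size_cat.
by move: ut; rewrite tE uniq_ins_leaf ?mem_head // => /andP [_ m_AB].
Qed.

Lemma ins_leaf_prune m t : uniq (labels t) -> increasing_ptree t ->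
  all (fun z => z <= m) (labels t) -> m \in labels t -> plabel t != m ->
  exists2 p, p \in slots (prune m t) & ins_leaf p.1 p.2 m (prune m t) = t.
Proof.
elim/ptree_nested_ind: t => a ts IH ut inc tm mt am.
have /andP [a_kids u_kids] := ut.
move: (inc); rewrite increasing_ptree_node => /andP [_ /allP inc_kids].
case: (boolP (has (fun c => plabel c == m) ts)) => [/hasP [c cts /eqP cm] | /hasPn m_kids].
  have c_leaf := increasing_max_leaf (inc_kids c cts) (all_labels_kid tm cts) cm.
  have [A [B tsE]] : exists A B, ts = A ++ leaf m :: B.
    by move: cts; rewrite c_leaf => /splitPr [A B]; exists A, B.
  rewrite tsE in ut *.
  have [tE m_AB] := ins_leaf_kids_split ut.
  rewrite tE prune_ins_leaf //; exists (a, size A) => //.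
  by rewrite mem_slots_node eqxx size_cat leq_addr.
have [c cts mc] : exists2 c, c \in ts & m \in labels c.
  by move: mt; rewrite inE eq_sym (negbTE am) => /flatten_mapP.
have pruneE : prune m (PNode a ts) = PNode a (map (prune m) ts).
  rewrite /=; congr PNode; apply/all_filterP; rewrite all_map; apply/allP => d dts /=.
  by rewrite plabel_prune m_kids.
have [[v i] vi_slot cE] := IH c cts (uniq_kid_labels u_kids cts) (inc_kids c cts)
  (all_labels_kid tm cts) mc (m_kids c cts).
have vc : v \in labels c := labels_prune (slot_label vi_slot).
rewrite pruneE; exists (v, i).
  by rewrite mem_slots_node; apply/orP; right; apply/hasP; exists (prune m c); rewrite ?map_f.
rewrite /=; case: ifP => [/eqP av | _].
  by move: a_kids; rewrite av; case/negP; apply/flatten_mapP; exists c.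
congr PNode; rewrite -map_comp; apply: map_id_in => d dts /=.
have [-> // | dc] := eqVneq d c.
have md : m \notin labels d.
  by apply: contra dc => md; apply/eqP; apply: kids_label_eq u_kids dts cts md mc.
rewrite prune_id // ins_leaf_id //; apply: contra dc => vd; apply/eqP.
exact: kids_label_eq u_kids dts cts vd vc.
Qed.

(** * Enumeration of increasing plane trees *)

Lemma plane_tree_on_uniq n t : plane_tree_on n t -> uniq (labels t).
Proof. by move/perm_uniq ->; apply: iota_uniq. Qed.

Lemma plane_tree_on_mem n t x : plane_tree_on n t -> (x \in labels t) = (0 < x <= n).
Proof. by move/perm_mem ->; rewrite mem_iota; lia. Qed.

Lemma plane_tree_on_lt n t : plane_tree_on n t -> all (fun z => z < n.+1) (labels t).
Proof. by move=> tn; apply/allP => z; rewrite (plane_tree_on_mem _ tn); lia. Qed.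

Lemma perm_iotaS n : perm_eq (n.+1 :: iota 1 n) (iota 1 n.+1).
Proof. by rewrite -cat1s perm_catC -[X in perm_eq _ (iota 1 X)]addn1 iotaD. Qed.

Lemma perm_labels_ins_leaf_uniq v i m t : uniq (labels t) -> v \in labels t ->
  perm_eq (labels (ins_leaf v i m t)) (m :: labels t).
Proof.
by move=> ut vt; rewrite (permPl (perm_labels_ins_leaf _ _ _ _)) (count_uniq_mem _ ut) vt.
Qed.

(* The increasing plane trees on [1..n.+1]. *)
Fixpoint increasing_ptrees (n : nat) : seq ptree :=
  if n is k.+1 then [seq ins_leaf p.1 p.2 n.+1 T | T <- increasing_ptrees k, p <- slots T]
  else [:: leaf 1].

Lemma mem_increasing_ptrees0 t :
  (t \in increasing_ptrees 0) = plane_tree_on 1 t && increasing_ptree t.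
Proof.
rewrite inE; apply/eqP/andP => [-> // | [t1 _]].
have := perm_size t1; case: t t1 => a [|c cs] t1 /=; last first.
  by rewrite size_cat; case: c {t1} => ? ?.
by move: (perm_mem t1 a); rewrite !inE eqxx => /esym /eqP ->.
Qed.

Lemma mem_increasing_ptrees n t :
  (t \in increasing_ptrees n) = plane_tree_on n.+1 t && increasing_ptree t.
Proof.
elim: n t => [|n IH] t; first exact: mem_increasing_ptrees0.
apply/allpairsPdep/andP => [[t0 [[v i] [+ vi_slot ->]]] | [tn inc]].
  rewrite IH => /andP [t0n inc0]; have vt0 := slot_label vi_slot.
  rewrite increasing_ins_leaf ?(plane_tree_on_lt t0n) //; split => //.
  rewrite /plane_tree_on (permPl (perm_labels_ins_leaf_uniq _ _ (plane_tree_on_uniq t0n) vt0)).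
  by rewrite /plane_tree_on -(perm_cons n.+2) in t0n; apply: perm_trans t0n (perm_iotaS _).
have ut := plane_tree_on_uniq tn.
have tm : all (fun z => z <= n.+2) (labels t).
  by apply/allP => z; rewrite (plane_tree_on_mem _ tn); lia.
have mt : n.+2 \in labels t by rewrite (plane_tree_on_mem _ tn) leqnn.
have root_m : plabel t != n.+2.
  apply/eqP => /(increasing_max_leaf inc tm) tE; move: tn.
  by rewrite /plane_tree_on tE => /perm_size.
have [[v i] vi_slot tE] := ins_leaf_prune ut inc tm mt root_m.
set t0 := prune n.+2 t in vi_slot tE; have vt0 := slot_label vi_slot.
move: (ut); rewrite -tE uniq_ins_leaf // => /andP [ut0 mt0].
have t0n : plane_tree_on n.+1 t0.
  rewrite /plane_tree_on -(perm_cons n.+2) -(permPl (perm_labels_ins_leaf_uniq i _ ut0 vt0)) tE.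
  by apply: perm_trans tn _; rewrite perm_sym perm_iotaS.
exists t0, (v, i); split => //; rewrite IH t0n /=.
by rewrite -tE increasing_ins_leaf ?(plane_tree_on_lt t0n) in inc.
Qed.

Lemma uniq_increasing_ptrees n : uniq (increasing_ptrees n).
Proof.
elim: n => //= n IH; apply: allpairs_uniq_dep => // [T | ].
  by rewrite mem_increasing_ptrees => /andP [/plane_tree_on_uniq /uniq_slots].
move=> [T p] [T' p'] /allpairsPdep [T1 [p1 [T1n p1T1 [-> ->]]]].
move=> /allpairsPdep [T2 [p2 [T2n p2T2 [-> ->]]]] /= E.
move: T1n T2n; rewrite !mem_increasing_ptrees => /andP [T1n _] /andP [T2n _].
have fresh T0 : plane_tree_on n.+1 T0 -> n.+2 \notin labels T0.
  by move=> T0n; rewrite (plane_tree_on_mem _ T0n) ltnn andbF.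
have T12 : T1 = T2.
  by rewrite -(prune_ins_leaf p1.1 p1.2 (fresh _ T1n)) E prune_ins_leaf ?fresh.
subst T2; case: p1 p2 p1T1 p2T2 E => [v i] [v' i'] vi v'i' /=.
by move/(ins_leaf_inj (plane_tree_on_uniq T1n) (fresh _ T1n) vi v'i') => [-> ->].
Qed.

(** * The generating function *)

Section Weights.
Local Open Scope ring_scope.
Variables (R : comNzRingType) (x t : R).

Definition ptree_weight (T : ptree) : R := x ^+ young_at 1 T * t ^+ eld T.

Lemma sum_slot_weights (Y E b d : nat) :
  \sum_(j <- iota 0 d.+1) x ^+ (Y + b * (d <= j)) * t ^+ (E + (j < d)) =
  x ^+ Y * t ^+ E * (t *+ d + x ^+ b).
Proof.
rewrite -[iota 0 d.+1]/(index_iota 0 d.+1) big_nat_recr //= leqnn ltnn muln1 addn0.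
rewrite (eq_big_nat _ _ (F2 := fun _ => x ^+ Y * t ^+ E.+1)) => [|j /andP [_ jd]]; last first.
  by rewrite leqNgt jd muln0 addn0 addn1.
by rewrite sumr_const_nat subn0 exprD exprS mulrDr -!mulrnAr; ring.
Qed.

Lemma sum_expr_eq1 (s : seq nat) : uniq s -> 1%N \in s ->
  \sum_(l <- s) x ^+ (l == 1%N) = x + (size s).-1%:R.
Proof.
move=> us s1; rewrite (bigD1_seq _ s1 us) /= expr1; congr (_ + _).
rewrite (eq_bigr (fun _ => 1%:R)) => [|l /negbTE -> //].
by rewrite -natr_sum sum1_count -(count_predC (pred1 1%N) s) (count_uniq_mem _ us) s1.
Qed.

Lemma sum_weight_ins_leaf m T0 :
  uniq (labels T0) -> all (fun z => z < m)%N (labels T0) -> 1%N \in labels T0 ->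
  \sum_(p <- slots T0) ptree_weight (ins_leaf p.1 p.2 m T0) =
  ptree_weight T0 * (x + (size (labels T0)).-1%:R + (size (labels T0)).-1%:R * t).
Proof.
move=> ut tm t1; rewrite /slots big_allpairs_dep.
rewrite (eq_big_seq (fun u => ptree_weight T0 * (t *+ deg_node u + x ^+ (plabel u == 1%N)))).
  rewrite -mulr_sumr big_split /= sumrMnr -(big_map plabel predT (fun l => x ^+ (l == 1%N))).
  rewrite map_plabel_subtrees sum_expr_eq1 // -(subtree_sum_deg T0) /= -/(subtree_sum _ _).
  by rewrite -mulr_natl; ring.
move=> u uT0; rewrite {2}/ptree_weight -sum_slot_weights; apply: eq_bigr => j _.
rewrite /ptree_weight /= young_at_ins_leaf // eld_ins_leaf //.
by rewrite (subtree_sum_at (fun w => ((plabel w == 1) * (deg_node w <= j))%N) ut uT0)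
  (subtree_sum_at (fun w => nat_of_bool (j < deg_node w)%N) ut uT0).
Qed.

Lemma sum_weight_increasing_ptrees n :
  \sum_(T <- increasing_ptrees n) ptree_weight T = \prod_(0 <= k < n) (x + k%:R + k%:R * t).
Proof.
elim: n => [|n IH]; first by rewrite big_seq1 big_geq // /ptree_weight expr0 mulr1.
rewrite big_allpairs_dep /= big_nat_recr //= -IH mulr_suml; apply: eq_big_seq => T.
rewrite mem_increasing_ptrees => /andP [Tn _].
rewrite sum_weight_ins_leaf ?(plane_tree_on_uniq Tn) ?(plane_tree_on_lt Tn) //.
  by rewrite (perm_size Tn) size_iota.
by rewrite (plane_tree_on_mem _ Tn).
Qed.

End Weights.

Lemma size_increasing_ptrees n : size (increasing_ptrees n) = \prod_(0 <= k < n) k.*2.+1.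
Proof.
apply/eqP; rewrite -(eqr_nat int) natr_prod -sum1_size natr_sum.
have := sum_weight_increasing_ptrees (1 : int) 1 n.
rewrite (eq_bigr (fun _ => 1%R : int)) => [-> | T _]; last by rewrite /ptree_weight !expr1n mulr1.
by apply/eqP/eq_bigr => k _; rewrite mulr1 -addrA -natrD addnn -add1n natrD.
Qed.

Lemma dfact_odd n : dfact n.*2.+1 = \prod_(0 <= k < n.+1) k.*2.+1.
Proof.
elim: n => [|n IH]; first by rewrite big_nat1.
by rewrite big_nat_recr //= -IH doubleS mulnC.
Qed.

Lemma dfact_2n_sub3 n : dfact (2 * n - 3) = \prod_(0 <= k < n.-1) k.*2.+1.
Proof.
case: n => [|[|n]]; try by rewrite big_geq.
by rewrite -dfact_odd; congr dfact; lia.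
Qed.

(** * Increasing rooted trees *)

Definition parent_choices n (i : 'I_n) : pred (option 'I_n) :=
  fun o => if o is Some j then j < i else val i == 0.

Lemma iter_parent_none n (p : {ffun 'I_n -> option 'I_n}) k :
  iter k (fun o => obind p o) None = None.
Proof. by elim: k => //= k ->. Qed.

Lemma iter_parent_reach n (p : {ffun 'I_n -> option 'I_n}) :
  (forall i, p i \in parent_choices i) ->
  forall k (i : 'I_n), i < k -> iter k (fun o => obind p o) (Some i) = None.
Proof.
move=> pP; elim=> // k IH i ik; rewrite iterSr /=.
have := pP i; rewrite /parent_choices /in_mem /=.
by case: (p i) => [j ji | _]; [apply: IH; lia | apply: iter_parent_none].
Qed.

Lemma increasing_rooted_treeE n (n0 : 0 < n) (p : {ffun 'I_n -> option 'I_n}) :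
  rooted_tree p && increasing_rtree p = (p \in family (@parent_choices n)).
Proof.
set i0 : 'I_n := Ordinal n0.
apply/andP/familyP => [[/andP [root1 _] /forallP inc] i | pP].
  have p0 : p i0 = None by have := inc i0; case: (p i0) => // j; rewrite ltn0.
  have := inc i; rewrite /parent_choices /in_mem /=; case pi: (p i) => [j|] // _.
  move: root1 => /cards1P [r rE].
  have : i \in [set i | p i == None] by rewrite inE pi.
  have : i0 \in [set i | p i == None] by rewrite inE p0.
  by rewrite rE !inE => /eqP <- /eqP ->.
split; last by apply/forallP => i; have := pP i; rewrite /parent_choices /in_mem /=; case: (p i).
apply/andP; split.
  apply/cards1P; exists i0; apply/setP => i; rewrite !inE.
  have := pP i; rewrite /parent_choices /in_mem /=; case: (p i) => [j ji | /eqP i_0].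
    by apply/esym/negbTE; apply: contraTneq ji => ->; rewrite ltn0.
  by apply/esym/eqP/val_inj.
apply/forallP => i; apply/existsP; exists (Ordinal (ltn_ord i : i.+1 < n.+1)).
exact/eqP/iter_parent_reach.
Qed.

Lemma card_ord_lt n (i : 'I_n) : #|[set j : 'I_n | j < i]| = i.
Proof.
have le_in : i <= n by apply: ltnW.
have -> : [set j : 'I_n | j < i] = [set widen_ord le_in k | k : 'I_i].
  apply/setP => j; rewrite inE; apply/idP/imsetP => [ji | [k _ ->]]; last by rewrite /= ltn_ord.
  by exists (Ordinal ji) => //; apply: val_inj.
by rewrite card_imset ?card_ord // => k1 k2 /(congr1 val) E; apply: val_inj.
Qed.

Lemma card_parent_choices n (i : 'I_n) : #|parent_choices i| = maxn 1 i.
Proof.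
have [i0 | i_gt0] := posnP i.
  rewrite (@eq_card _ _ (pred1 None)) ?card1 ?i0 // => -[j|];
  by rewrite /parent_choices /in_mem /= ?i0 ?ltn0.
rewrite (@eq_card _ _ [set Some j | j in [set j : 'I_n | j < i]]).
  by rewrite card_imset ?card_ord_lt; [lia | exact: Some_inj].
case=> [j | ]; first by rewrite (mem_imset _ _ Some_inj) inE.
rewrite -[None \in parent_choices i]/(val i == 0) eqn0Ngt i_gt0 /=.
by apply/esym/imsetP => -[].
Qed.

Lemma card_increasing_rooted_trees n : 0 < n ->
  #|[set p : {ffun 'I_n -> option 'I_n} | rooted_tree p && increasing_rtree p]| = (n.-1)`!.
Proof.
move=> n0; rewrite (eq_card (B := family (@parent_choices n))); last first.
  by move=> p; rewrite inE increasing_rooted_treeE.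
rewrite card_family foldrE big_map big_enum /=.
rewrite (eq_bigr (fun i : 'I_n => maxn 1 i)) => [|i _]; last exact: card_parent_choices.
case: n n0 => // n _; elim: n => [|n IH]; first by rewrite big_ord_recr big_ord0.
by rewrite big_ord_recr /= IH factS mulnC; congr (_ * _); lia.
Qed.

Theorem proposition2p4 (n : nat) (hn : (1 <= n)%N) :
  (exists s : seq ptree,
      uniq s
      /\ (forall T : ptree, (T \in s) = plane_tree_on n T && no_improper T)
      /\ (forall (R : comNzRingType) (x t : R),
            (\sum_(T <- s) x ^+ young_at 1 T * t ^+ eld T
             = \prod_(0 <= k < n.-1) (x + k%:R + k%:R * t))%R))
  /\ #|[set p : {ffun 'I_n -> option 'I_n} | rooted_tree p && increasing_rtree p]|
       = (n.-1)`!
  /\ (exists s : seq ptree,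
      uniq s
      /\ (forall T : ptree, (T \in s) = plane_tree_on n T && increasing_ptree T)
      /\ size s = dfact (2 * n - 3)).
Proof.
have memE T : (T \in increasing_ptrees n.-1) = plane_tree_on n T && increasing_ptree T.
  by rewrite mem_increasing_ptrees prednK.
split; [|split].
- exists (increasing_ptrees n.-1); split; first exact: uniq_increasing_ptrees.
  split; first by move=> T; rewrite memE no_improperE.
  by move=> R x t; apply: sum_weight_increasing_ptrees.
- exact: card_increasing_rooted_trees.
- exists (increasing_ptrees n.-1); split; first exact: uniq_increasing_ptrees.
  by split; [exact: memE | rewrite size_increasing_ptrees dfact_2n_sub3].
Qed.
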